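(* Let $\Gamma$ be a countable discrete group and $\mu$ a symmetric, generating probability measure on $\Gamma$. Let $f\in\ell^\infty(\Gamma)$ be real valued with $\|f\|_\infty\le1$ and $f*\mu=-f$, such that $\mathcal P^n_\mu(|f|)$ increases pointwise to $1$ as $n\to\infty$. Then there exists a group homomorphism $\chi:\Gamma\to\{\pm1\}$ with $\chi(h)=-1$ for all $h\in\operatorname{supp}(\mu)$; in particular $\chi*\mu=-\chi$.
   Context: $(f*\mu)(x)=\sum_{h\in\Gamma}\mu(h)f(xh)$, and $\mathcal P^n_\mu(f)(x)=\sum_h\mu^{*n}(h)f(xh)$. $\mu$ symmetric: $\mu(g)=\mu(g^{-1})$; generating: its support generates $\Gamma$ as a group. *)

From HB Require Import structures.
From mathcomp Require Import all_boot all_order all_algebra.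
From mathcomp Require Import monoid.
From mathcomp Require Import all_classical all_reals all_analysis.
Set Implicit Arguments. Unset Strict Implicit. Unset Printing Implicit Defensive.
Import Order.TTheory GRing.Theory Num.Theory.
Import numFieldNormedType.Exports.
Local Open Scope classical_set_scope.
Local Open Scope ring_scope.

Section Defs.
Variables (R : realType) (G : groupType).

(* Sum over the whole (countable) group of a real function, defined as
   (sum of positive part) - (sum of negative part), each as an esum.
   For absolutely summable g this is the usual sum. *)
Definition gsum (g : G -> R) : R :=
  fine (\esum_(h in [set: G]) (Num.max (g h) 0)%:E) -
  fine (\esum_(h in [set: G]) (Num.max (- g h) 0)%:E).

Definition conv_right (f mu : G -> R) (x : G) : R :=
  gsum (fun h => mu h * f (x * h)%g).

Definition conv_meas (mu nu : G -> R) (g : G) : R :=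
  gsum (fun h => mu h * nu (h^-1 * g)%g).

Fixpoint conv_pow (mu : G -> R) (n : nat) : G -> R :=
  match n with
  | 0%N => fun g => if g == 1%g then 1 else 0
  | n'.+1 => conv_meas (conv_pow mu n') mu
  end.

Definition markov_pow (mu : G -> R) (n : nat) (f : G -> R) (x : G) : R :=
  gsum (fun h => conv_pow mu n h * f (x * h)%g).

Definition prob_measure (mu : G -> R) : Prop :=
  (forall g, 0 <= mu g) /\ (\esum_(h in [set: G]) (mu h)%:E = 1%E).

Definition symmetric_meas (mu : G -> R) : Prop := forall g, mu g = mu (g^-1)%g.

Definition generating (mu : G -> R) : Prop :=
  forall H : set G,
    H 1%g ->
    (forall x y, H x -> H y -> H (x * y)%g) ->
    (forall x, H x -> H (x^-1)%g) ->
    [set h | mu h != 0] `<=` H ->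
    H = [set: G].

End Defs.

From HB Require Import structures.
From mathcomp Require Import all_boot all_order all_algebra.
From mathcomp Require Import monoid.
From mathcomp Require Import all_classical all_reals all_analysis.
From mathcomp Require Import lra.
Set Implicit Arguments. Unset Strict Implicit. Unset Printing Implicit Defensive.
Import Order.TTheory GRing.Theory Num.Theory.
Import numFieldNormedType.Exports.
Local Open Scope classical_set_scope.
Local Open Scope ring_scope.

(* Call g antiharmonic if |g| <= 1 and g * mu = -g.  Since the mu-average of the
   nonnegative function 1 + g(y .) is 1 - g(y), such a g satisfies the one-step
   inequality  mu(s) (1 + g(ys)) <= 1 - g(y).  Iterating it along a word
   s_1 ... s_k whose letters all have weight >= d (the sign alternates, -g being
   antiharmonic too) gives  d^k (1 - (-1)^k g(y s_1 ... s_k)) <= 1 - g(y).  An odd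
   word in supp(mu) with product 1 would therefore force |g| <= 1 - d^k everywhere;
   for g = f this bounds every P^n_mu(|f|) by 1 - d^k, against P^n_mu(|f|) --> 1.
   So supp(mu) has no odd relation.  As supp(mu) is symmetric and generating, every
   x is the product of a word over supp(mu), the parity of its length is well
   defined, and chi(x) = (-1)^parity is the required sign character; finally
   chi * mu = -chi because chi(xh) = -chi(x) whenever mu(h) <> 0. *)

Section NonnegSums.
Variables (R : realType) (T T' : choiceType).
Local Open Scope ereal_scope.

Lemma esum_ge_term (a : T -> \bar R) t : (forall i, 0 <= a i) ->
  a t <= \esum_(i in [set: T]) a i.
Proof.
move=> a0; apply: esum_ge; exists [set t]; first by split => //; exact: finite_set1.
by rewrite fsbig_set1.
Qed.

Lemma fine_le_ge0 (x : \bar R) : 0 <= x -> (fine x)%:E <= x.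
Proof. by case: x => //= r _; rewrite lee_fin. Qed.

Lemma esumZl_le (S : set T) (c : R) (a : T -> \bar R) :
  (0 <= c)%R -> (forall i, 0 <= a i) ->
  \esum_(i in S) (c%:E * a i) <= c%:E * \esum_(i in S) a i.
Proof.
move=> c0 a0; apply: ge_ereal_sup => _ [X [finX XS] <-].
rewrite fsbig_finite//= -ge0_sume_distrr; last by move=> i _; exact: a0.
apply: lee_wpmul2l; first by rewrite lee_fin.
by rewrite -fsbig_finite//; apply: ereal_sup_ubound; exists X.
Qed.

Lemma esum_swap (a : T -> T' -> \bar R) : (forall i j, 0 <= a i j) ->
  \esum_(i in [set: T]) \esum_(j in [set: T']) a i j =
  \esum_(j in [set: T']) \esum_(i in [set: T]) a i j.
Proof.
move=> a0; rewrite !esum_esum//.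
rewrite (reindex_esum ([set: T'] `*`` (fun=> [set: T])) _ (fun x => (x.2, x.1)))//.
split.
- by move=> [i j] _.
- by move=> [i1 i2] [j1 j2] _ _ /= [-> ->].
- by move=> [i1 i2] _; exists (i2, i1).
Qed.

End NonnegSums.

Section GroupSums.
Variables (R : realType) (G : groupType).

Lemma gsum_ge0 (g : G -> R) : (forall h, 0 <= g h) ->
  gsum g = fine (\esum_(h in [set: G]) (g h)%:E).
Proof.
move=> g0; rewrite /gsum [X in _ - fine X]esum1 ?subr0.
  by congr fine; apply: eq_esum => h _; rewrite max_l.
by move=> h _; rewrite max_r // oppr_le0.
Qed.

Lemma gsum_opp (g : G -> R) : gsum (fun h => - g h) = - gsum g.
Proof.
rewrite /gsum opprB; congr (_ - _); congr fine; apply: eq_esum => h _.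
by rewrite opprK.
Qed.

Lemma addr_max_opp (x : R) : x + Num.max (- x) 0 = Num.max x 0.
Proof.
have [x0|] := boolP (0 <= x); last rewrite -ltNge => x0.
  by rewrite (max_r (_ : - x <= 0)) ?oppr_le0 // max_l // addr0.
by rewrite (max_l (_ : 0 <= - x)) ?oppr_ge0 ?ltW // (max_r (_ : x <= 0)) ?ltW // subrr.
Qed.

(* If phi is dominated by a probability mu, the nonnegative family mu + phi has
   extended sum 1 + gsum phi; in particular mu-averages can be computed termwise. *)
Lemma gsum_add_mass (mu phi : G -> R) :
  (forall h, `|phi h| <= mu h) -> \esum_(h in [set: G]) (mu h)%:E = 1%E ->
  \esum_(h in [set: G]) (mu h + phi h)%:E = (1 + gsum phi)%:E.
Proof.
move=> phi_le mu1.
have mu0 h : 0 <= mu h := le_trans (normr_ge0 _) (phi_le h).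
have part_fin (a : G -> R) : (forall h, 0 <= a h <= mu h) ->
    \esum_(h in [set: G]) (a h)%:E = (fine (\esum_(h in [set: G]) (a h)%:E))%:E.
  move=> a_le; rewrite fineK // ge0_fin_numE; last first.
    by apply: esum_ge0 => h _; rewrite lee_fin; case/andP: (a_le h).
  apply: (le_lt_trans _ (ltry 1)); rewrite -mu1; apply: le_esum => h _.
  by rewrite lee_fin; case/andP: (a_le h).
have pos_le h : 0 <= Num.max (phi h) 0 <= mu h.
  by rewrite le_max lexx orbT ge_max mu0 andbT (le_trans (ler_norm _)).
have neg_le h : 0 <= Num.max (- phi h) 0 <= mu h.
  rewrite le_max lexx orbT ge_max mu0 andbT /=.
  by apply: le_trans (phi_le h); rewrite -normrN; exact: ler_norm.
have sum_ge0 h : 0 <= mu h + phi h.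
  by rewrite -lerBlDl sub0r; have := phi_le h; rewrite ler_norml => /andP[].
have split_parts : (\esum_(h in [set: G]) (mu h + phi h)%:E +
    \esum_(h in [set: G]) (Num.max (- phi h) 0)%:E =
    1 + \esum_(h in [set: G]) (Num.max (phi h) 0)%:E)%E.
  rewrite -mu1 -!esumD => [|h _|h _|h _|h _]; rewrite ?lee_fin ?le_max ?lexx ?orbT //.
  by apply: eq_esum => h _; rewrite -!EFinD -addrA addr_max_opp.
move: split_parts; rewrite (part_fin _ pos_le) (part_fin _ neg_le).
have : (0 <= \esum_(h in [set: G]) (mu h + phi h)%:E)%E.
  by apply: esum_ge0 => h _; rewrite lee_fin.
rewrite /gsum; case: (\esum_(h in [set: G]) _) => [r||] //= _.
by rewrite -!EFinD => -[sum_eq]; congr (_%:E); lra.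
Qed.

End GroupSums.

Section ConvolutionPowers.
Variables (R : realType) (G : groupType) (mu : G -> R).
Hypothesis mu0 : forall g, 0 <= mu g.
Hypothesis mu1 : (\esum_(h in [set: G]) (mu h)%:E = 1)%E.

Lemma conv_pow_ge0 n g : 0 <= conv_pow mu n g.
Proof.
elim: n g => [|n IH] g /=; first by case: ifP.
rewrite /conv_meas gsum_ge0; last by move=> h; apply: mulr_ge0.
by apply: fine_ge0; apply: esum_ge0 => h _; rewrite lee_fin mulr_ge0.
Qed.

Lemma esum_translate (h : G) :
  (\esum_(g in [set: G]) (mu (h^-1 * g)%g)%:E = 1)%E.
Proof.
rewrite -(reindex_esum [set: G] [set: G] (fun g => (h^-1 * g)%g) (fun j => (mu j)%:E)) //.
split.
- by [].
- by move=> a b _ _ /mulgI.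
- by move=> a _; exists (h * a)%g => //; rewrite mulKg.
Qed.

Lemma conv_pow_mass n : (\esum_(g in [set: G]) (conv_pow mu n g)%:E <= 1)%E.
Proof.
elim: n => [|n IH] /=.
  rewrite (esumID [set 1%g]); last by move=> g _; rewrite lee_fin; case: ifP.
  rewrite setTI esum_set1 ?eqxx // esum1 ?adde0 // => g [_ /= ng].
  by case: eqP => // eg; case: ng; rewrite eg.
have term_ge0 h g : (0 <= (conv_pow mu n h * mu (h^-1 * g)%g)%:E)%E.
  by rewrite lee_fin mulr_ge0 // conv_pow_ge0.
apply: (@le_trans _ _ (\esum_(g in [set: G]) \esum_(h in [set: G])
    (conv_pow mu n h * mu (h^-1 * g)%g)%:E)).
  apply: le_esum => g _; rewrite /conv_meas gsum_ge0; last first.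
    by move=> h; apply: mulr_ge0 => //; exact: conv_pow_ge0.
  by apply: fine_le_ge0; apply: esum_ge0.
rewrite esum_swap //; apply: le_trans IH; apply: le_esum => h _.
under eq_esum do rewrite EFinM.
apply: le_trans; first apply: esumZl_le.
- exact: conv_pow_ge0.
- by move=> g; rewrite lee_fin.
by rewrite esum_translate mule1.
Qed.

Lemma markov_pow_le n (phi : G -> R) (M : R) x :
  (forall y, 0 <= phi y <= M) -> markov_pow mu n phi x <= M.
Proof.
move=> phi_bnd; have phi0 y : 0 <= phi y by case/andP: (phi_bnd y).
have M0 : 0 <= M := le_trans (phi0 x) (proj2 (andP (phi_bnd x))).
have term_ge0 h : 0 <= conv_pow mu n h * phi (x * h)%g.
  by rewrite mulr_ge0 ?conv_pow_ge0.
rewrite /markov_pow gsum_ge0 //.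
have esum_le : (\esum_(h in [set: G]) (conv_pow mu n h * phi (x * h)%g)%:E <= M%:E)%E.
  apply: (@le_trans _ _ (\esum_(h in [set: G]) (M%:E * (conv_pow mu n h)%:E)%E)).
    apply: le_esum => h _; rewrite -EFinM lee_fin mulrC.
    by apply: ler_wpM2r; [exact: conv_pow_ge0|case/andP: (phi_bnd (x * h)%g)].
  apply: le_trans; first by apply: esumZl_le => // g; rewrite lee_fin conv_pow_ge0.
  by rewrite -[leRHS]mule1; apply: lee_wpmul2l; [rewrite lee_fin|exact: conv_pow_mass].
move: esum_le; have : (0 <= \esum_(h in [set: G]) (conv_pow mu n h * phi (x * h)%g)%:E)%E.
  by apply: esum_ge0 => h _; rewrite lee_fin.
by case: (\esum_(h in [set: G]) _).
Qed.

End ConvolutionPowers.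

Section Antiharmonic.
Variables (R : realType) (G : groupType) (mu : G -> R).
Hypothesis mu0 : forall g, 0 <= mu g.
Hypothesis mu1 : (\esum_(h in [set: G]) (mu h)%:E = 1)%E.

Definition antiharmonic (g : G -> R) : Prop :=
  (forall x, `|g x| <= 1) /\ (forall x, conv_right g mu x = - g x).

Lemma antiharmonicN g : antiharmonic g -> antiharmonic (fun x => - g x).
Proof.
move=> [g1 gE]; split => x; first by rewrite normrN.
rewrite -gE /conv_right -gsum_opp; congr gsum.
by apply: funext => h; rewrite mulrN.
Qed.

(* the mu-average of the nonnegative function 1 + g(y .) equals 1 - g(y), so
   each of its terms is at most 1 - g(y) *)
Lemma antiharmonic_step g : antiharmonic g ->
  forall y s, mu s * (1 + g (y * s)%g) <= 1 - g y.
Proof.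
move=> [g1 gE] y s.
have dom h : `|mu h * g (y * h)%g| <= mu h.
  by rewrite normrM ger0_norm // ler_piMr.
have avg := gsum_add_mass dom mu1; rewrite -/(conv_right g mu y) gE in avg.
rewrite -lee_fin -avg mulrDr mulr1.
apply: (@esum_ge_term _ _ (fun h => (mu h + mu h * g (y * h)%g)%:E) s) => h.
rewrite lee_fin -[X in X + _]mulr1 -mulrDr mulr_ge0 // -lerBlDl sub0r lerNl.
by case/ler_normlP: (g1 (y * h)%g).
Qed.

(* Walking along a word w whose letters have mu-weight at least d: each letter
   flips the sign of g and costs a factor d. *)
Lemma antiharmonic_walk (d : R) (w : seq G) :
  0 < d -> (forall s, s \in w -> d <= mu s) ->
  forall g, antiharmonic g -> forall y,
  d ^+ size w * (1 - (-1) ^+ size w * g (y * \prod_(s <- w) s)%g) <= 1 - g y.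
Proof.
move=> d0; elim: w => [|a w IH] w_heavy g g_ah y /=.
  by rewrite big_nil expr0 !mul1r mulg1.
have w'_heavy s : s \in w -> d <= mu s.
  by move=> sw; apply: w_heavy; rewrite in_cons sw orbT.
have da : d <= mu a by apply: w_heavy; rewrite mem_head.
have ga_ge0 : 0 <= 1 + g (y * a)%g.
  by rewrite -lerBlDl sub0r lerNl; case/ler_normlP: (g_ah.1 (y * a)%g).
have walk_rest := IH w'_heavy _ (antiharmonicN g_ah) (y * a)%g.
rewrite big_cons mulgA !exprS.
apply: le_trans (antiharmonic_step g_ah y a).
rewrite -mulrA; apply: le_trans (ler_wpM2r ga_ge0 da).
apply: ler_wpM2l; first exact: ltW.
by move: walk_rest; rewrite opprK mulrN mulN1r mulNr.
Qed.

(* A closed walk of odd length returns with the opposite sign, which forces every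
   antiharmonic function to stay uniformly away from the values +1 and -1. *)
Lemma antiharmonic_odd_loop (d : R) (w : seq G) :
  0 < d <= 1 -> (forall s, s \in w -> d <= mu s) ->
  odd (size w) -> (\prod_(s <- w) s = 1)%g ->
  forall g, antiharmonic g -> forall y, `|g y| <= 1 - d ^+ size w.
Proof.
move=> /andP[d0 d1] w_heavy w_odd w_loop.
have c0 : 0 < d ^+ size w by rewrite exprn_gt0.
have c1 : d ^+ size w <= 1 by rewrite exprn_ile1 // ltW.
suff upper g : antiharmonic g -> forall y, g y <= 1 - d ^+ size w.
  move=> g g_ah y; apply/ler_normlP; split; last exact: upper.
  exact: (upper _ (antiharmonicN g_ah)).
move=> g_ah y; have := antiharmonic_walk d0 w_heavy g_ah y.
rewrite w_loop mulg1 -signr_odd w_odd expr1 mulN1r opprK.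
have /ler_normlP[gl gu] := g_ah.1 y.
nra.
Qed.

Lemma support_word_weight (w : seq G) : all (fun s => mu s != 0) w ->
  exists2 d : R, 0 < d <= 1 & forall s, s \in w -> d <= mu s.
Proof.
elim: w => [|a w IH] /=; first by exists 1 => //; rewrite ltr01 lexx.
case/andP=> mu_a /IH[d /andP[d0 d1] w_heavy].
have mu_a_pos : 0 < mu a by rewrite lt_def mu_a mu0.
exists (Num.min (mu a) d); first by rewrite lt_min mu_a_pos d0 ge_min d1 orbT.
move=> s; rewrite in_cons => /orP[/eqP ->|sw]; first by rewrite ge_min lexx.
by rewrite ge_min w_heavy ?orbT.
Qed.

(* If some antiharmonic f has P^n_mu(|f|)(x) --> 1 at a point x, then no word of
   odd length in the support of mu is a relation: otherwise |f| <= 1 - c < 1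
   everywhere, and so is every P^n_mu(|f|). *)
Lemma no_odd_support_relation (f : G -> R) x :
  antiharmonic f ->
  (fun n => markov_pow mu n (fun y => `|f y|) x) @ \oo --> (1 : R) ->
  forall w, all (fun s => mu s != 0) w -> (\prod_(s <- w) s = 1)%g ->
  ~~ odd (size w).
Proof.
move=> f_ah f_lim w w_supp w_loop; apply/negP => w_odd.
have [d d01 w_heavy] := support_word_weight w_supp.
have f_bnd := antiharmonic_odd_loop d01 w_heavy w_odd w_loop f_ah.
have : 1 <= 1 - d ^+ size w.
  apply: (cvgr_to_le f_lim); apply: nearW => n.
  by apply: markov_pow_le => // y; rewrite normr_ge0 f_bnd.
have : 0 < d ^+ size w by rewrite exprn_gt0 //; case/andP: d01.
lra.
Qed.

End Antiharmonic.

Section SignCharacter.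
Variables (R : realType) (G : groupType) (S : pred G).
Local Open Scope group_scope.
Hypothesis S_sym : forall s, S s -> S s^-1.
Hypothesis S_gen : forall H : set G,
  H 1 -> (forall x y, H x -> H y -> H (x * y)) -> (forall x, H x -> H x^-1) ->
  [set h | S h] `<=` H -> H = [set: G].
Hypothesis S_even : forall w, all S w -> \prod_(s <- w) s = 1 -> ~~ odd (size w).

Definition parity_word (b : bool) (x : G) : Prop :=
  exists2 w : seq G, all S w & odd (size w) = b /\ \prod_(s <- w) s = x.

Lemma parity_word1 : parity_word false 1.
Proof. by exists [::]; rewrite // big_nil. Qed.

Lemma parity_word_letter s : S s -> parity_word true s.
Proof. by move=> Ss; exists [:: s]; rewrite /= ?Ss // big_seq1. Qed.

Lemma parity_wordM b1 b2 x y :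
  parity_word b1 x -> parity_word b2 y -> parity_word (b1 (+) b2) (x * y).
Proof.
move=> [w1 S1 [odd1 <-]] [w2 S2 [odd2 <-]].
by exists (w1 ++ w2); rewrite ?all_cat ?S1 // size_cat oddD odd1 odd2 big_cat.
Qed.

Lemma parity_wordV b x : parity_word b x -> parity_word b x^-1.
Proof.
move=> [w Sw [odd_w <-]]; exists (map (fun s => s^-1) (rev w)).
  by rewrite all_map all_rev; apply: sub_all Sw => s /S_sym.
by rewrite size_map size_rev big_map prodgV revK.
Qed.

(* every element has a word, since the elements with a word form a subgroup containing S *)
Lemma parity_word_total x : exists b, parity_word b x.
Proof.
suff all_words : [set y | exists b, parity_word b y] = [set: G].
  by have : [set y | exists b, parity_word b y] x by rewrite all_words.
apply: S_gen.
- by exists false; exact: parity_word1.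
- by move=> y z [b1 y_w] [b2 z_w]; exists (b1 (+) b2); exact: parity_wordM.
- by move=> y [b y_w]; exists b; exact: parity_wordV.
- by move=> s Ss; exists true; exact: parity_word_letter.
Qed.

(* the parity is well defined, since there are no odd relations *)
Lemma parity_word_unique b1 b2 x :
  parity_word b1 x -> parity_word b2 x -> b1 = b2.
Proof.
move=> x1 x2; have [w Sw [odd_w w1]] := parity_wordM x1 (parity_wordV x2).
move: (S_even Sw); rewrite w1 mulgV odd_w => /(_ erefl).
by case: b1 {x1 odd_w}; case: b2 {x2}.
Qed.

Definition sign_char (x : G) : R := if `[< parity_word true x >] then (-1)%R else 1%R.

Lemma sign_charE b x : parity_word b x -> sign_char x = ((-1) ^+ b)%R.
Proof.
rewrite /sign_char => x_b; case: asboolP => [x_odd|x_even].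
  by rewrite -(parity_word_unique x_odd x_b).
by case: b x_b => // x_b; case: x_even.
Qed.

Lemma sign_char_sign x : sign_char x = 1%R \/ sign_char x = (-1)%R.
Proof. by rewrite /sign_char; case: asboolP; [right|left]. Qed.

Lemma sign_charM x y : sign_char (x * y) = (sign_char x * sign_char y)%R.
Proof.
have [[b1 x_b] [b2 y_b]] := (parity_word_total x, parity_word_total y).
by rewrite (sign_charE (parity_wordM x_b y_b)) (sign_charE x_b) (sign_charE y_b) signr_addb.
Qed.

Lemma sign_char_letter s : S s -> sign_char s = (-1)%R.
Proof. by move=> /parity_word_letter/sign_charE->; rewrite expr1. Qed.

End SignCharacter.

(* a sign character equal to -1 on the support of a probability mu is antiharmonic:
   chi(x h) = - chi(x) for every h charged by mu *)
Lemma conv_right_sign_char (R : realType) (G : groupType) (mu chi : G -> R) :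
  (forall g, 0 <= mu g) -> (\esum_(h in [set: G]) (mu h)%:E = 1)%E ->
  (forall x, chi x = 1 \/ chi x = -1) ->
  (forall x y, chi (x * y)%g = chi x * chi y) ->
  (forall h, mu h != 0 -> chi h = -1) ->
  forall x, conv_right chi mu x = - chi x.
Proof.
move=> mu0 mu1 chi_sign chiM chi_supp x.
have mass : gsum mu = 1 by rewrite gsum_ge0 // mu1.
have flip : (fun h => mu h * chi (x * h)%g) = (fun h => - (chi x * mu h)).
  apply: funext => h; have [->|mu_h] := eqVneq (mu h) 0; first by rewrite mul0r mulr0 oppr0.
  by rewrite chiM (chi_supp h mu_h) mulrN1 mulrN mulrC.
rewrite /conv_right flip gsum_opp.
case: (chi_sign x) => ->.
- by rewrite (funext (fun h => mul1r (mu h))) mass.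
- by rewrite (funext (fun h => mulN1r (mu h))) gsum_opp mass opprK.
Qed.

Theorem theorem4p4 (R : realType) (G : groupType) (mu f : G -> R) :
  countable [set: G] ->
  prob_measure mu -> symmetric_meas mu -> generating mu ->
  (forall x, `|f x| <= 1) ->
  (forall x, conv_right f mu x = - f x) ->
  (forall x, nondecreasing_seq (fun n => markov_pow mu n (fun y => `|f y|) x)) ->
  (forall x, (fun n => markov_pow mu n (fun y => `|f y|) x) @ \oo --> (1 : R)) ->
  exists chi : G -> R,
    [/\ (forall x, chi x = 1 \/ chi x = -1),
        (forall x y, chi (x * y)%g = chi x * chi y),
        (forall h, mu h != 0 -> chi h = -1) &
        (forall x, conv_right chi mu x = - chi x)].
Proof.
move=> _ [mu0 mu1] mu_sym mu_gen f1 fE _ f_lim.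
pose S := fun h => mu h != 0.
have S_sym s : S s -> S (s^-1)%g by rewrite /S -mu_sym.
have S_even := no_odd_support_relation mu0 mu1 (conj f1 fE) (f_lim 1%g).
have chi_sign := @sign_char_sign R G S.
have chiM := sign_charM R S_sym mu_gen S_even.
have chi_supp := sign_char_letter R S_sym S_even.
exists (sign_char R S); split => //.
exact: conv_right_sign_char.
Qed.
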